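(* In the setting of the context, suppose in addition that $\mathcal B_1,\mathcal B_2\subset\mathcal B$ are subalgebras such that multiplication $\mathcal B_1\otimes\mathcal B_2\to\mathcal B$ is a linear isomorphism, $\Delta(\mathcal B_1)\subset\mathcal B_1\otimes\mathcal B$, $\Delta(\mathcal B_2)\subset\mathcal B\otimes\mathcal B_2$, and define $\Pi'_1(b_1b_2)=b_1\varepsilon(b_2)$, $\Pi'_2(b_1b_2)=\varepsilon(b_1)b_2$ ($b_i\in\mathcal B_i$). If $\mathcal A_i$ and $\mathcal B_j$ are mutually orthogonal for $i\neq j$, i.e. $\langle a_i,b_j\rangle=\varepsilon(a_i)\varepsilon(b_j)$ for all $a_i\in\mathcal A_i$, $b_j\in\mathcal B_j$, $i\neq j$, then $$(\Pi_i\otimes\mathrm{id})\mathcal R=(\mathrm{id}\otimes\Pi'_i)\mathcal R=(\Pi_i\otimes\Pi'_i)\mathcal R,\qquad i=1,2,$$ so the factorizations $\mathcal R=\mathcal R_1\mathcal R_2$ induced by the decompositions of $\mathcal A$ and of $\mathcal B$ coincide.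
   Context: $\mathcal A$ and $\mathcal B$ are bialgebras (comultiplication $\Delta$, counit $\varepsilon$) with a nondegenerate pairing $\langle\cdot,\cdot\rangle:\mathcal A\otimes\mathcal B\to\mathbb C$ satisfying $\langle a,b_1b_2\rangle=\langle\Delta(a),b_1\otimes b_2\rangle$, $\langle a_1a_2,b\rangle=\langle a_2\otimes a_1,\Delta(b)\rangle$ (graded with finite-dimensional components, tensors in the completed tensor product). $\mathcal R=\sum_\alpha a^\alpha\otimes b_\alpha$ is the canonical tensor ($\sum_\alpha\langle a^\alpha,b\rangle b_\alpha=b$, $\sum_\alpha a^\alpha\langle a,b_\alpha\rangle=a$). $\mathcal A_1,\mathcal A_2\subset\mathcal A$ are subalgebras with multiplication $\mathcal A_1\otimes\mathcal A_2\to\mathcal A$ a linear isomorphism, $\Delta(\mathcal A_1)\subset\mathcal A\otimes\mathcal A_1$, $\Delta(\mathcal A_2)\subset\mathcal A_2\otimes\mathcal A$, and $\Pi_1(a_1a_2)=a_1\varepsilon(a_2)$, $\Pi_2(a_1a_2)=\varepsilon(a_1)a_2$ for $a_i\in\mathcal A_i$. *)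

From HB Require Import structures.
From mathcomp Require Import all_boot all_order all_algebra.
Set Implicit Arguments. Unset Strict Implicit. Unset Printing Implicit Defensive.
Import GRing.Theory.
Local Open Scope ring_scope.

Section Defs.
Variable F : fieldType.

Definition lin_fun (V : lmodType F) (f : V -> F) : Prop :=
  forall k x y, f (k *: x + y) = k * f x + f y.

(* A finite sum  sum_p p.1 (x) p.2  in the algebraic tensor product U (x) V is
   represented by a list of pairs; two lists represent the same tensor iff
   all pairs of linear functionals agree on them. *)
Definition tev (U V : lmodType F) (phi : U -> F) (psi : V -> F)
  (s : seq (U * V)) : F := \sum_(p <- s) phi p.1 * psi p.2.

Definition teq (U V : lmodType F) (s t : seq (U * V)) : Prop :=
  forall (phi : U -> F) (psi : V -> F), lin_fun phi -> lin_fun psi ->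
    tev phi psi s = tev phi psi t.

Definition tev3 (U V W : lmodType F) (phi : U -> F) (psi : V -> F) (chi : W -> F)
  (s : seq ((U * V) * W)) : F := \sum_(p <- s) phi p.1.1 * psi p.1.2 * chi p.2.

Definition teq3 (U V W : lmodType F) (s t : seq ((U * V) * W)) : Prop :=
  forall (phi : U -> F) (psi : V -> F) (chi : W -> F),
    lin_fun phi -> lin_fun psi -> lin_fun chi ->
    tev3 phi psi chi s = tev3 phi psi chi t.

(* Bialgebra axioms: D a is (a representative of) Delta(a) in A (x) A. *)
Record bialgebra (A : algType F) (D : A -> seq (A * A)) (eps : A -> F) : Prop := {
  eps_lin : lin_fun eps;
  eps_one : eps 1 = 1;
  eps_mul : forall x y, eps (x * y) = eps x * eps y;
  D_lin : forall k x y,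
    teq (D (k *: x + y)) ([seq (k *: p.1, p.2) | p <- D x] ++ D y);
  D_mul : forall x y,
    teq (D (x * y)) [seq (p.1 * q.1, p.2 * q.2) | p <- D x, q <- D y];
  D_one : teq (D 1) [:: (1, 1)];
  D_coass : forall x,
    teq3 [seq ((q.1, q.2), p.2) | p <- D x, q <- D p.1]
         [seq ((p.1, q.1), q.2) | p <- D x, q <- D p.2];
  counit_l : forall x, \sum_(p <- D x) eps p.1 *: p.2 = x;
  counit_r : forall x, \sum_(p <- D x) eps p.2 *: p.1 = x
}.

Record bialg_pairing (A B : algType F) (DA : A -> seq (A * A))
    (DB : B -> seq (B * B)) (pair : A -> B -> F) : Prop := {
  pair_linl : forall b, lin_fun (fun a => pair a b);
  pair_linr : forall a, lin_fun (pair a);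
  pair_mulr : forall a b1 b2,
    pair a (b1 * b2) = \sum_(p <- DA a) pair p.1 b1 * pair p.2 b2;
  pair_mull : forall a1 a2 b,
    pair (a1 * a2) b = \sum_(p <- DB b) pair a2 p.1 * pair a1 p.2;
  pair_ndl : forall a, (forall b, pair a b = 0) -> a = 0;
  pair_ndr : forall b, (forall a, pair a b = 0) -> b = 0
}.

Definition has_fsum (I : eqType) (V : zmodType) (f : I -> V) (v : V) : Prop :=
  exists s : seq I, [/\ uniq s, (forall i, f i != 0 -> i \in s)
                      & \sum_(i <- s) f i = v].

(* R = sum_alpha ra alpha (x) rb alpha is the canonical tensor *)
Definition canonical_tensor (A B : algType F) (pair : A -> B -> F)
    (I : eqType) (ra : I -> A) (rb : I -> B) : Prop :=
  (forall b, has_fsum (fun i => pair (ra i) b *: rb i) b) /\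
  (forall a, has_fsum (fun i => pair a (rb i) *: ra i) a).

(* Elements of the completed tensor product A (x)^ B, given as formal series
   sum_i x i (x) y i, are identified with their values on B (x) A via the
   pairing: (b,a) |-> sum_i <x i, b> <a, y i>. *)
Definition ct_eval (A B : algType F) (pair : A -> B -> F) (I : eqType)
    (x : I -> A) (y : I -> B) (b : B) (a : A) (v : F) : Prop :=
  has_fsum (fun i => pair (x i) b * pair a (y i)) v.

Definition ct_eq (A B : algType F) (pair : A -> B -> F) (I : eqType)
    (x : I -> A) (y : I -> B) (x' : I -> A) (y' : I -> B) : Prop :=
  forall b a, exists v, ct_eval pair x y b a v /\ ct_eval pair x' y' b a v.

Definition mult_iso (A : algType F) (A1 A2 : {pred A}) : Prop :=
  (forall a, exists s : seq (A * A),
      all (fun p => (p.1 \in A1) && (p.2 \in A2)) s /\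
      a = \sum_(p <- s) p.1 * p.2) /\
  (forall s : seq (A * A), all (fun p => (p.1 \in A1) && (p.2 \in A2)) s ->
      \sum_(p <- s) p.1 * p.2 = 0 -> teq s [::]).

Definition coprod_into (A : algType F) (D : A -> seq (A * A))
    (S P1 P2 : {pred A}) : Prop :=
  forall a, a \in S -> exists s, teq s (D a) /\
     all (fun p => (p.1 \in P1) && (p.2 \in P2)) s.

End Defs.

From HB Require Import structures.
From mathcomp Require Import all_boot all_order all_algebra.
From mathcomp Require Import ring.
Set Implicit Arguments. Unset Strict Implicit. Unset Printing Implicit Defensive.
Import GRing.Theory.
Local Open Scope ring_scope.

(* Orthogonality plus the coideal conditions make each pairing factor through
   the counit on the "wrong" factor: for a1 in A1 and b2 in B2 one gets
   <a1, b b2> = eps(b2) <a1, b>, and dually <a a2, b1> = eps(a2) <a, b1>.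
   Evaluating on products x y and b1 b2, which span A and B, this shows that
   Pi_i and Pi'_i are adjoint for the pairing.  Since the canonical tensor
   evaluates to <a, b> at (b, a), the three tensors in the statement all
   evaluate to <a, Pi'_i b> (using Pi'_i Pi'_i = Pi'_i for the last one). *)

Section LinearFunctionals.
Variables (F : fieldType) (V : lmodType F) (f : V -> F).
Hypothesis f_lin : lin_fun f.

Lemma lin0 : f 0 = 0.
Proof.
have := f_lin 1 0 0; rewrite scaler0 addr0 mul1r => E.
by apply: (addrI (f 0)); rewrite addr0 -E.
Qed.

Lemma linD x y : f (x + y) = f x + f y.
Proof. by have := f_lin 1 x y; rewrite scale1r mul1r. Qed.

Lemma linZ k x : f (k *: x) = k * f x.
Proof. by have := f_lin k x 0; rewrite addr0 lin0 addr0. Qed.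

Lemma lin_sum (J : Type) (s : seq J) (g : J -> V) :
  f (\sum_(j <- s) g j) = \sum_(j <- s) f (g j).
Proof.
elim: s => [|x s IH]; first by rewrite !big_nil lin0.
by rewrite !big_cons linD IH.
Qed.

Lemma lin_mulr c : lin_fun (fun x => f x * c).
Proof. by move=> k x y; rewrite f_lin mulrDl mulrA. Qed.

End LinearFunctionals.

Lemma teq_tev_on (F : fieldType) (U V : lmodType F) (s t : seq (U * V))
    (phi phi' : U -> F) (psi psi' : V -> F) :
  teq s t -> lin_fun phi -> lin_fun psi -> lin_fun phi' -> lin_fun psi' ->
  {in s, forall p, phi p.1 * psi p.2 = phi' p.1 * psi' p.2} ->
  tev phi psi t = tev phi' psi' t.
Proof.
move=> st phiL psiL phi'L psi'L E; rewrite -!st //.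
by rewrite /tev !big_seq; apply: eq_bigr.
Qed.

Lemma has_fsum_ext (J : eqType) (V : zmodType) (f g : J -> V) v :
  f =1 g -> has_fsum f v -> has_fsum g v.
Proof.
move=> E [s [Us Hs <-]]; exists s; split=> // [i|].
  by rewrite -E; apply: Hs.
by apply: eq_bigr => i _; rewrite E.
Qed.

Section Bialgebra.
Variables (F : fieldType) (A : algType F) (D : A -> seq (A * A)) (eps : A -> F).
Hypothesis HD : bialgebra D eps.

Lemma tev_counitr (phi : A -> F) c a : lin_fun phi ->
  tev phi (fun x => eps x * c) (D a) = c * phi a.
Proof.
move=> phiL; rewrite -{2}(counit_r HD a) (lin_sum phiL) mulr_sumr.
by apply: eq_bigr => p _; rewrite (linZ phiL); ring.
Qed.

Lemma tev_counitl (psi : A -> F) c a : lin_fun psi ->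
  tev (fun x => eps x * c) psi (D a) = c * psi a.
Proof.
move=> psiL; rewrite -{2}(counit_l HD a) (lin_sum psiL) mulr_sumr.
by apply: eq_bigr => p _; rewrite (linZ psiL); ring.
Qed.

Lemma proj_left_idem (S1 S2 : {pred A}) (P : {linear A -> A}) :
  mult_iso S1 S2 -> 1 \in S2 ->
  (forall x y, x \in S1 -> y \in S2 -> P (x * y) = eps y *: x) ->
  forall a, P (P a) = P a.
Proof.
move=> [spanS _] S2_1 PE a; have [s [Hs ->]] := spanS a.
rewrite !raddf_sum; apply: eq_big_seq => q /(allP Hs)/andP[q1 q2].
have Px := PE _ _ q1 S2_1; rewrite mulr1 (eps_one HD) scale1r in Px.
by rewrite /= PE // linearZ /= Px.
Qed.

Lemma proj_right_idem (S1 S2 : {pred A}) (P : {linear A -> A}) :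
  mult_iso S1 S2 -> 1 \in S1 ->
  (forall x y, x \in S1 -> y \in S2 -> P (x * y) = eps x *: y) ->
  forall a, P (P a) = P a.
Proof.
move=> [spanS _] S1_1 PE a; have [s [Hs ->]] := spanS a.
rewrite !raddf_sum; apply: eq_big_seq => q /(allP Hs)/andP[q1 q2].
have Py := PE _ _ S1_1 q2; rewrite mul1r (eps_one HD) scale1r in Py.
by rewrite /= PE // linearZ /= Py.
Qed.

End Bialgebra.

Section PairedBialgebras.
Variables (F : fieldType) (A B : algType F).
Variables (DA : A -> seq (A * A)) (epsA : A -> F).
Variables (DB : B -> seq (B * B)) (epsB : B -> F) (pair : A -> B -> F).
Hypotheses (HA : bialgebra DA epsA) (HB : bialgebra DB epsB).
Hypothesis HP : bialg_pairing DA DB pair.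

Let pairL b := pair_linl HP b.
Let pairR a := pair_linr HP a.

Lemma pair_mulr_epsr (S T : {pred A}) a b b' :
  coprod_into DA S (fun _ => true) T -> a \in S ->
  (forall x, x \in T -> pair x b' = epsA x * epsB b') ->
  pair a (b * b') = epsB b' * pair a b.
Proof.
move=> DS Sa orth; have [s [sD sT]] := DS a Sa.
transitivity (tev (pair^~ b) (pair^~ b') (DA a)); first by rewrite (pair_mulr HP).
rewrite -(tev_counitr HA _ _ (pairL b)).
apply: (teq_tev_on sD) => //; try exact: lin_mulr (eps_lin HA) _.
by move=> p /(allP sT)/andP[_ /orth ->].
Qed.

Lemma pair_mulr_epsl (S T : {pred A}) a b b' :
  coprod_into DA S T (fun _ => true) -> a \in S ->
  (forall x, x \in T -> pair x b = epsA x * epsB b) ->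
  pair a (b * b') = epsB b * pair a b'.
Proof.
move=> DS Sa orth; have [s [sD sT]] := DS a Sa.
transitivity (tev (pair^~ b) (pair^~ b') (DA a)); first by rewrite (pair_mulr HP).
rewrite -(tev_counitl HA _ _ (pairL b')).
apply: (teq_tev_on sD) => //; try exact: lin_mulr (eps_lin HA) _.
by move=> p /(allP sT)/andP[/orth -> _].
Qed.

Lemma pair_mull_epsr (S T : {pred B}) a a' b :
  coprod_into DB S T (fun _ => true) -> b \in S ->
  (forall y, y \in T -> pair a' y = epsA a' * epsB y) ->
  pair (a * a') b = epsA a' * pair a b.
Proof.
move=> DS Sb orth; have [s [sD sT]] := DS b Sb.
transitivity (tev (pair a') (pair a) (DB b)); first by rewrite (pair_mull HP).
rewrite -(tev_counitl HB _ _ (pairR a)).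
apply: (teq_tev_on sD) => //; try exact: lin_mulr (eps_lin HB) _.
by move=> p /(allP sT)/andP[/orth -> _]; rewrite (mulrC (epsA a')).
Qed.

Lemma pair_mull_epsl (S T : {pred B}) a a' b :
  coprod_into DB S (fun _ => true) T -> b \in S ->
  (forall y, y \in T -> pair a y = epsA a * epsB y) ->
  pair (a * a') b = epsA a * pair a' b.
Proof.
move=> DS Sb orth; have [s [sD sT]] := DS b Sb.
transitivity (tev (pair a') (pair a) (DB b)); first by rewrite (pair_mull HP).
rewrite -(tev_counitr HB _ _ (pairR a')).
apply: (teq_tev_on sD) => //; try exact: lin_mulr (eps_lin HB) _.
by move=> p /(allP sT)/andP[_ /orth ->]; rewrite (mulrC (epsA a)).
Qed.

Lemma adjoint_on_products (A1 A2 : {pred A}) (B1 B2 : {pred B})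
    (P : {linear A -> A}) (P' : {linear B -> B}) :
  mult_iso A1 A2 -> mult_iso B1 B2 ->
  (forall x y b1 b2, x \in A1 -> y \in A2 -> b1 \in B1 -> b2 \in B2 ->
     pair (P (x * y)) (b1 * b2) = pair (x * y) (P' (b1 * b2))) ->
  forall a b, pair (P a) b = pair a (P' b).
Proof.
move=> [spanA _] [spanB _] PP' a b.
have [sa [Ha ->]] := spanA a; have [sb [Hb ->]] := spanB b.
rewrite raddf_sum !(lin_sum (pairL _)); apply: eq_big_seq => p.
move=> /(allP Ha)/andP[p1 p2].
rewrite raddf_sum !(lin_sum (pairR _)); apply: eq_big_seq => q.
by move=> /(allP Hb)/andP[q1 q2]; apply: PP'.
Qed.

Section Projections.
Variables (A1 A2 : {pred A}) (B1 B2 : {pred B}).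
Hypotheses (cA1 : coprod_into DA A1 (fun _ => true) A1)
  (cA2 : coprod_into DA A2 A2 (fun _ => true))
  (cB1 : coprod_into DB B1 B1 (fun _ => true))
  (cB2 : coprod_into DB B2 (fun _ => true) B2).
Hypotheses (orth12 : forall a b, a \in A1 -> b \in B2 -> pair a b = epsA a * epsB b)
  (orth21 : forall a b, a \in A2 -> b \in B1 -> pair a b = epsA a * epsB b).

Lemma proj1_adjoint (Pi1 : {linear A -> A}) (Pi1' : {linear B -> B}) :
  (forall x y, x \in A1 -> y \in A2 -> Pi1 (x * y) = epsA y *: x) ->
  (forall x y, x \in B1 -> y \in B2 -> Pi1' (x * y) = epsB y *: x) ->
  mult_iso A1 A2 -> mult_iso B1 B2 ->
  forall a b, pair (Pi1 a) b = pair a (Pi1' b).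
Proof.
move=> PiE Pi'E mA mB; apply: adjoint_on_products mA mB _ => x y b1 b2 x1 y2 b11 b22.
rewrite PiE // Pi'E // (linZ (pairL _)) (linZ (pairR _)).
rewrite (pair_mulr_epsr b1 cA1 x1 (fun _ z1 => orth12 z1 b22)).
by rewrite (pair_mull_epsr x cB1 b11 (fun _ => orth21 y2)); ring.
Qed.

Lemma proj2_adjoint (Pi2 : {linear A -> A}) (Pi2' : {linear B -> B}) :
  (forall x y, x \in A1 -> y \in A2 -> Pi2 (x * y) = epsA x *: y) ->
  (forall x y, x \in B1 -> y \in B2 -> Pi2' (x * y) = epsB x *: y) ->
  mult_iso A1 A2 -> mult_iso B1 B2 ->
  forall a b, pair (Pi2 a) b = pair a (Pi2' b).
Proof.
move=> PiE Pi'E mA mB; apply: adjoint_on_products mA mB _ => x y b1 b2 x1 y2 b11 b22.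
rewrite PiE // Pi'E // (linZ (pairL _)) (linZ (pairR _)).
rewrite (pair_mulr_epsl b2 cA2 y2 (fun _ z2 => orth21 z2 b11)).
by rewrite (pair_mull_epsl y cB2 b22 (fun _ => orth12 x1)); ring.
Qed.

End Projections.

Variables (I : eqType) (ra : I -> A) (rb : I -> B).
Hypothesis Rcan : canonical_tensor pair ra rb.

Lemma ct_eval_canonical b a :
  ct_eval pair ra rb b a (pair a b).
Proof.
have [s [Us Hs sE]] := Rcan.2 a; exists s; split=> //.
  move=> i; rewrite mulrC -(linZ (pairL b)) => nz; apply: Hs.
  by apply: contraNneq nz => ->; rewrite (lin0 (pairL b)).
rewrite -[in RHS]sE (lin_sum (pairL b)); apply: eq_bigr => i _.
by rewrite (linZ (pairL b)) mulrC.
Qed.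

Lemma ct_eq_of_adjoint (P : {linear A -> A}) (P' : {linear B -> B}) :
  (forall a b, pair (P a) b = pair a (P' b)) -> (forall b, P' (P' b) = P' b) ->
  ct_eq pair (fun i => P (ra i)) rb ra (fun i => P' (rb i)) /\
  ct_eq pair ra (fun i => P' (rb i)) (fun i => P (ra i)) (fun i => P' (rb i)).
Proof.
move=> adj idem.
have ev1 b a : ct_eval pair (fun i => P (ra i)) rb b a (pair a (P' b)).
  by apply: has_fsum_ext (ct_eval_canonical (P' b) a) => i; rewrite adj.
have ev2 b a : ct_eval pair ra (fun i => P' (rb i)) b a (pair a (P' b)).
  by rewrite -adj; apply: has_fsum_ext (ct_eval_canonical b (P a)) => i; rewrite adj.
have ev3 b a : ct_eval pair (fun i => P (ra i)) (fun i => P' (rb i)) b a (pair a (P' b)).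
  rewrite -idem -adj.
  by apply: has_fsum_ext (ct_eval_canonical (P' b) (P a)) => i; rewrite !adj.
by split=> b a; exists (pair a (P' b)).
Qed.

End PairedBialgebras.

Theorem mainTheorem11 (F : fieldType) (A B : algType F)
  (DA : A -> seq (A * A)) (epsA : A -> F)
  (DB : B -> seq (B * B)) (epsB : B -> F)
  (pair : A -> B -> F)
  (I : eqType) (ra : I -> A) (rb : I -> B)
  (A1 A2 : {pred A}) (B1 B2 : {pred B})
  (Pi1 Pi2 : {linear A -> A}) (Pi1' Pi2' : {linear B -> B}) :
  bialgebra DA epsA -> bialgebra DB epsB ->
  bialg_pairing DA DB pair ->
  canonical_tensor pair ra rb ->
  subalg_closed A1 -> subalg_closed A2 -> mult_iso A1 A2 ->
  coprod_into DA A1 (fun _ => true) A1 ->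
  coprod_into DA A2 A2 (fun _ => true) ->
  (forall x y, x \in A1 -> y \in A2 -> Pi1 (x * y) = epsA y *: x) ->
  (forall x y, x \in A1 -> y \in A2 -> Pi2 (x * y) = epsA x *: y) ->
  subalg_closed B1 -> subalg_closed B2 -> mult_iso B1 B2 ->
  coprod_into DB B1 B1 (fun _ => true) ->
  coprod_into DB B2 (fun _ => true) B2 ->
  (forall x y, x \in B1 -> y \in B2 -> Pi1' (x * y) = epsB y *: x) ->
  (forall x y, x \in B1 -> y \in B2 -> Pi2' (x * y) = epsB x *: y) ->
  (forall a b, a \in A1 -> b \in B2 -> pair a b = epsA a * epsB b) ->
  (forall a b, a \in A2 -> b \in B1 -> pair a b = epsA a * epsB b) ->
  (* (Pi_i (x) id) R = (id (x) Pi'_i) R = (Pi_i (x) Pi'_i) R, i = 1, 2 *)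
  (ct_eq pair (fun i => Pi1 (ra i)) rb ra (fun i => Pi1' (rb i)) /\
   ct_eq pair ra (fun i => Pi1' (rb i)) (fun i => Pi1 (ra i)) (fun i => Pi1' (rb i))) /\
  (ct_eq pair (fun i => Pi2 (ra i)) rb ra (fun i => Pi2' (rb i)) /\
   ct_eq pair ra (fun i => Pi2' (rb i)) (fun i => Pi2 (ra i)) (fun i => Pi2' (rb i))).
Proof.
move=> HA HB HP Rcan _ _ mA cA1 cA2 Pi1E Pi2E [B1_1 _ _] [B2_1 _ _] mB cB1 cB2
  Pi1'E Pi2'E orth12 orth21.
split; apply: (ct_eq_of_adjoint HP Rcan).
- exact: (proj1_adjoint HA HB HP cA1 cB1 orth12 orth21 Pi1E Pi1'E mA mB).
- exact: (proj_left_idem HB mB B2_1 Pi1'E).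
- exact: (proj2_adjoint HA HB HP cA2 cB2 orth12 orth21 Pi2E Pi2'E mA mB).
- exact: (proj_right_idem HB mB B1_1 Pi2'E).
Qed.
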